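(* Let $r\in\mathbb{F}_2((x^{-1}))$ with $\deg(r)\ge0$. If $[r](0)=1$ or $[r](1)=1$, then $[S(r)](0)=1$.
   Context: $\mathbb{F}_2((x^{-1}))$ is the field of formal series $\sum_{z\in\mathbb{Z}}a_zx^z$, $a_z\in\mathbb{F}_2$, with $a_z\ne0$ for only finitely many positive $z$; $\deg$ is the largest exponent with nonzero coefficient. The polynomial part is $[\sum a_zx^z]=\sum_{z\ge0}a_zx^z$. $S(r)=\frac{r}{x+1}$ if $[r](1)=0$ and $S(r)=\frac{xr}{x+1}$ if $[r](1)=1$. *)

From HB Require Import structures.
From mathcomp Require Import all_boot all_order all_algebra.
Set Implicit Arguments. Unset Strict Implicit. Unset Printing Implicit Defensive.
Import Order.TTheory GRing.Theory Num.Theory.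
Local Open Scope ring_scope.

(* An element of F_2((x^{-1})): coefficients a_z in 'F_2 indexed by z : int,
   together with a bound N such that a_z = 0 for all z > N
   (i.e. only finitely many positive exponents carry a nonzero coefficient). *)
Record lser := LSer {
  coef : int -> 'F_2;
  bnd : nat;
  coef_bnd : forall z : int, (bnd%:Z < z) -> coef z = 0
}.

Definition polypart (r : lser) : {poly 'F_2} :=
  \poly_(i < (bnd r).+1) coef r i%:Z.

Definition deg_ge0 (r : lser) : Prop := exists n : nat, coef r n%:Z != 0.

(* s = t / (x+1) in F_2((x^{-1})) means (x+1) s = t; the coefficient of x^z in
   (x+1) s is s_{z-1} + s_z.  Here t is given by its coefficient function. *)
Definition is_quot_x1 (t : int -> 'F_2) (s : lser) : Prop :=
  forall z : int, coef s (z - 1) + coef s z = t z.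

(* s = S(r):  S(r) = r/(x+1) if [r](1) = 0, and S(r) = x r/(x+1) if [r](1) = 1.
   The coefficient of x^z in x r is r_{z-1}. *)
Definition is_S (r s : lser) : Prop :=
  if (polypart r).[1] == 1 then is_quot_x1 (fun z => coef r (z - 1)) s
  else is_quot_x1 (coef r) s.

From mathcomp Require Import all_boot all_order all_algebra.
Import GRing.Theory.
Local Open Scope ring_scope.

(* Since s vanishes at high exponents, the relation s_(z-1) + s_z = t_z telescopes to
   s_0 = sum_(k >= 1) t_k.  If [r](1) = 1 then t_k = r_(k-1) and this sum is [r](1) = 1;
   otherwise [r](1) = 0, [r](0) = 1 and t_k = r_k, so the sum is [r](1) - [r](0) = 1. *)

Lemma pchar_F2 : (2 \in [pchar 'F_2])%N.
Proof. exact: pchar_Fp. Qed.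

Lemma F2_eq0_neq1 (b : 'F_2) : b != 1 -> b = 0.
Proof. by case: b => -[|[|//]] ? ? //; apply/val_inj. Qed.

Lemma horner0_polypart (r : lser) : (polypart r).[0] = coef r 0.
Proof. by rewrite horner_coef0 coef_poly. Qed.

Lemma horner1_polypart (r : lser) (n : nat) : (bnd r < n)%N ->
  (polypart r).[1] = \sum_(0 <= i < n) coef r i%:Z.
Proof.
move=> lt_rn; rewrite horner_poly (big_cat_nat (n := (bnd r).+1)) //=.
rewrite [X in _ + X]big1_seq ?addr0 => [|i /andP[_]]; last first.
  by rewrite mem_index_iota => /andP[lt_ri _]; apply: coef_bnd; rewrite ltz_nat.
by rewrite big_mkord; apply: eq_bigr => i _; rewrite expr1n mulr1.
Qed.

Lemma coef0_quot_x1 (t : int -> 'F_2) (s : lser) (n : nat) :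
  (bnd s < n)%N -> is_quot_x1 t s -> coef s 0 = \sum_(1 <= k < n.+1) t k%:Z.
Proof.
move=> lt_sn st.
have telescope m : coef s 0 = coef s m%:Z + \sum_(1 <= k < m.+1) t k%:Z.
  elim: m => [|m IHm]; first by rewrite big_geq // addr0.
  have step : coef s m%:Z = t m.+1%:Z + coef s m.+1%:Z.
    by rewrite -(st m.+1) -[m.+1]addn1 PoszD addrK -addrA addrr_pchar2 ?pchar_F2 ?addr0.
  by rewrite big_nat_recr //= IHm step [t _ + _]addrC -addrA [t _ + _]addrC.
by rewrite (telescope n) coef_bnd ?add0r // ltz_nat.
Qed.

Theorem lemma3p2 (r s : lser) :
  deg_ge0 r ->
  ((polypart r).[0] = 1 \/ (polypart r).[1] = 1) ->
  is_S r s ->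
  (polypart s).[0] = 1.
Proof.
(* deg(r) >= 0 is implied by the second hypothesis, since otherwise [r] = 0. *)
move=> _ r01; rewrite horner0_polypart /is_S.
set n := (maxn (bnd r) (bnd s)).+1.
have lt_rn : (bnd r < n)%N by rewrite ltnS leq_maxl.
have lt_sn : (bnd s < n)%N by rewrite ltnS leq_maxr.
case: eqP => [r1 | /eqP r1_neq1] /(coef0_quot_x1 _ _ _ lt_sn) -> //.
  rewrite big_add1 -r1 (horner1_polypart _ _ lt_rn); apply: eq_bigr => k _.
  by rewrite -[k.+1]addn1 PoszD addrK.
have r0 : (polypart r).[0] = 1 by case: r01 => // r1; rewrite r1 eqxx in r1_neq1.
have r1_split : (polypart r).[1] = (polypart r).[0] + \sum_(1 <= k < n.+1) coef r k%:Z.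
  by rewrite horner0_polypart (horner1_polypart _ _ (leqW lt_rn)) big_ltn.
rewrite (F2_eq0_neq1 _ r1_neq1) r0 in r1_split.
by apply: (addrI 1); rewrite -r1_split addrr_pchar2 ?pchar_F2.
Qed.
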